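(* Let $\Gamma$ be a Deza graph with parameters $(n,k,k-1,a)$, $k>1$, $\beta=1$. Let $x$ be an $A$-vertex and $y$ an $NA$-vertex of $\Gamma$. Then either all possible edges between $\{x,x_b\}$ and $\{y,y_b\}$ are present, or there are no such edges.
   Context: A Deza graph with parameters $(n,k,b,a)$, $a\le b$, is a $k$-regular graph on $n$ vertices in which any two distinct vertices have $a$ or $b$ common neighbours; $\beta$ is the number of vertices $u\ne v$ with exactly $b$ common neighbours with a given vertex $v$ (independent of $v$). Since $\beta=1$, for each vertex $x$ let $x_b$ denote the unique vertex having $b=k-1$ common neighbours with $x$. A vertex $x$ is an $A$-vertex if $x$ is adjacent to $x_b$, and an $NA$-vertex otherwise. *)

From mathcomp Require Import all_boot.
Set Implicit Arguments. Unset Strict Implicit. Unset Printing Implicit Defensive.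

Definition simple_graph (T : finType) (e : rel T) : Prop :=
  symmetric e /\ irreflexive e.

Definition cn (T : finType) (e : rel T) (x y : T) : nat :=
  #|[set z | e x z && e y z]|.

Definition regular (T : finType) (e : rel T) (k : nat) : Prop :=
  forall x : T, #|[set y | e x y]| = k.

Definition deza (T : finType) (e : rel T) (n k b a : nat) : Prop :=
  [/\ simple_graph e, #|T| = n, regular e k, a <= b &
      forall x y : T, x != y -> cn e x y = a \/ cn e x y = b].

Definition beta_at (T : finType) (e : rel T) (b : nat) (v : T) : nat :=
  #|[set u | (u != v) && (cn e v u == b)]|.

(* xb is the unique vertex having b common neighbours with x *)
Definition is_mate (T : finType) (e : rel T) (b : nat) (x xb : T) : Prop :=
  xb != x /\ cn e x xb = b.

Definition A_vertex (T : finType) (e : rel T) (xb : T -> T) (x : T) : bool :=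
  e x (xb x).

From mathcomp Require Import all_boot.
Set Implicit Arguments. Unset Strict Implicit. Unset Printing Implicit Defensive.

(* In a k-regular graph, cn(u, w) = k - 1 means that u has at most one
   neighbour outside N(w).  For an adjacent pair x ~ x_b this private
   neighbour is the partner itself, so x and x_b see every other vertex
   alike; in particular x and x_b are adjacent to y iff, and to y_b iff,
   the other one is.  If x (hence x_b) were adjacent to exactly one of the
   non-adjacent pair y, y_b, then x and x_b would be two distinct private
   neighbours of that vertex with respect to the other. *)

Lemma cn_sym (T : finType) (e : rel T) x y : cn e x y = cn e y x.
Proof. by apply: eq_card => z; rewrite !inE andbC. Qed.

Lemma beta_le1_mate_uniq (T : finType) (e : rel T) b v u u' :
  beta_at e b v <= 1 -> is_mate e b v u -> is_mate e b v u' -> u = u'.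
Proof.
move=> /card_le1_eqP uniq_b [uv cu] [u'v cu'].
by apply: uniq_b; rewrite inE ?uv ?u'v ?cu ?cu' eqxx.
Qed.

Lemma mate_involutive (T : finType) (e : rel T) b (xb : T -> T) :
  (forall v, beta_at e b v = 1) -> (forall v, is_mate e b v (xb v)) ->
  involutive xb.
Proof.
move=> beta1 mate v; have [vxv cvxv] := mate v.
apply: (beta_le1_mate_uniq (e := e) (b := b) (v := xb v)); rewrite ?beta1 //.
by split; rewrite 1?eq_sym // cn_sym.
Qed.

Lemma A_vertex_mate (T : finType) (e : rel T) (xb : T -> T) v :
  symmetric e -> involutive xb -> A_vertex e xb (xb v) = A_vertex e xb v.
Proof. by move=> esym xbK; rewrite /A_vertex xbK esym. Qed.

Section NearlyTwinVertices.

Variables (T : finType) (e : rel T) (k : nat).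
Hypotheses (esym : symmetric e) (eirr : irreflexive e) (reg : regular e k).

Lemma private_neighbour_uniq u w p q :
  cn e u w = k.-1 -> e u p -> ~~ e w p -> e u q -> ~~ e w q -> p = q.
Proof.
move=> cuw up wp uq wq.
have private_le1 : #|[set z | e u z] :\: [set z | e u z && e w z]| <= 1.
  rewrite cardsD; set Nu := [set z | e u z].
  rewrite (setIidPr _); last by apply/subsetP => z; rewrite !inE => /andP[].
  by rewrite [#|Nu|]reg [#|_|]cuw; case: k => //= m; rewrite subSnn.
by apply: (card_le1_eqP private_le1); rewrite !inE ?up ?uq ?(negbTE wp) ?(negbTE wq).
Qed.

Lemma adjacent_mate_twins x x' v :
  cn e x x' = k.-1 -> e x x' -> v != x -> v != x' -> e x v = e x' v.
Proof.
move=> cxx' xx' vx vx'; have x'x : e x' x by rewrite esym.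
have cx'x : cn e x' x = k.-1 by rewrite cn_sym.
apply/idP/idP => xv; apply/negPn/negP => x'v.
- by case/eqP: vx'; apply: (private_neighbour_uniq cxx' xv x'v xx'); rewrite eirr.
- by case/eqP: vx; apply: (private_neighbour_uniq cx'x xv x'v x'x); rewrite eirr.
Qed.

Lemma twins_adjacent_both_or_neither u u' y y' :
  u != u' -> cn e y y' = k.-1 -> e u y = e u' y -> e u y' = e u' y' ->
  e u y = e u y'.
Proof.
move=> uu' cyy' uy uy'; have cy'y : cn e y' y = k.-1 by rewrite cn_sym.
apply/idP/idP => h; apply/negPn/negP => h'; case/eqP: uu'.
- by apply: (private_neighbour_uniq cyy'); rewrite esym -?uy -?uy'.
- by apply: (private_neighbour_uniq cy'y); rewrite esym -?uy -?uy'.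
Qed.

End NearlyTwinVertices.

Theorem lemma4 (T : finType) (e : rel T) (n k a : nat) (xb : T -> T) :
  deza e n k k.-1 a -> 1 < k ->
  (forall v : T, beta_at e k.-1 v = 1) ->
  (forall v : T, is_mate e k.-1 v (xb v)) ->
  forall x y : T, A_vertex e xb x -> ~~ A_vertex e xb y ->
  (forall u v, u \in [:: x; xb x] -> v \in [:: y; xb y] -> e u v) \/
  (forall u v, u \in [:: x; xb x] -> v \in [:: y; xb y] -> ~~ e u v).
Proof.
move=> [[esym eirr] _ reg _ _] _ beta1 mate x y Ax NAy.
have xbK := mate_involutive beta1 mate.
have [xbx cx] := mate x; have [_ cy] := mate y.
have NAyb : ~~ A_vertex e xb (xb y) by rewrite A_vertex_mate.
have not_x_pair v : ~~ A_vertex e xb v -> (v != x) && (v != xb x).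
  by move=> NAv; apply/andP; split; apply: contraNneq NAv => ->;
    rewrite ?A_vertex_mate.
have /andP[yx yxb] := not_x_pair y NAy.
have /andP[ybx ybxb] := not_x_pair _ NAyb.
have twin_y := adjacent_mate_twins esym eirr reg cx Ax yx yxb.
have twin_yb := adjacent_mate_twins esym eirr reg cx Ax ybx ybxb.
have xxb : x != xb x by rewrite eq_sym.
have same := twins_adjacent_both_or_neither esym reg xxb cy twin_y twin_yb.
have all_eq u v : u \in [:: x; xb x] -> v \in [:: y; xb y] -> e u v = e x y.
  by rewrite !inE => /orP[]/eqP-> /orP[]/eqP->; rewrite -?twin_y -?twin_yb -?same.
by case: (boolP (e x y)) => xy; [left | right] => u v /all_eq/[apply]->.
Qed.
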